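(* Fix any ordering $e_1,\dots,e_n$ of $V$. Let $D\subseteq V$ be a dense set and let $\mathcal O$ be a set with $|\mathcal O|\le k$ and $f(\mathcal O)=\mathrm{OPT}$. Suppose that (1) $|D_L|\le0.95\,\eta k$, (2) $f(D_L)\ge0.85\,f(D)$, (3) $|\mathcal O_R|\le0.15\,k$, and (4) $f(\mathcal O_R\mid D)\ge0.05\,f(\mathcal O\mid D)$. Then the output $S$ of Algorithm 1 on this stream satisfies $f(S)\ge0.50025\cdot\mathrm{OPT}$.
   Context: $V$ is a finite ground set with $|V|=n$; $f:2^V\to\mathbb{R}_{\ge0}$ is monotone, submodular and normalized ($f(\emptyset)=0$); $f(X\mid Y)=f(X\cup Y)-f(Y)$, $f(e\mid Y)=f(\{e\}\mid Y)$. $k\le n$ is a positive integer and $\mathrm{OPT}=\max\{f(S):S\subseteq V,|S|\le k\}$. A set $D$ is dense if $|D|\le\eta k$ and $f(D)\ge\frac{1-\gamma}{2}\mathrm{OPT}$, where $\gamma=10^{-2}$, $\eta=5\cdot10^{-5}$. For $T\subseteq V$, $T_L$ is the set of elements of $T$ at positions $i\le0.9n$ and $T_R=T\setminus T_L$. Algorithm 1 (knows $\mathrm{OPT}$): start with $S=\emptyset$; for $i=1,\dots,n$, add $e_i$ to $S$ if $|S|<k$ and either ($i\le 0.9n$ and $f(e_i\mid S)\ge\frac{100}{k}\mathrm{OPT}$) or ($i>0.9n$ and $f(e_i\mid S)\ge\frac{1}{10k}\mathrm{OPT}$); return $S$. *)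

From HB Require Import structures.
From mathcomp Require Import all_boot all_order all_algebra.
Set Implicit Arguments. Unset Strict Implicit. Unset Printing Implicit Defensive.
Import Order.TTheory GRing.Theory Num.Theory.
Local Open Scope ring_scope.

Section Defs.
Variables (R : realFieldType) (T : finType).

Definition marg (f : {set T} -> R) (X Y : {set T}) : R := f (X :|: Y) - f Y.

Definition monotone (f : {set T} -> R) : Prop :=
  forall A B : {set T}, A \subset B -> f A <= f B.
Definition submodular (f : {set T} -> R) : Prop :=
  forall A B : {set T}, f (A :|: B) + f (A :&: B) <= f A + f B.
Definition normalized (f : {set T} -> R) : Prop := f set0 = 0.
Definition nonneg (f : {set T} -> R) : Prop := forall A, 0 <= f A.

(* OPT = max { f S : |S| <= k } (the empty set is feasible, f >= 0) *)
Definition OPT (f : {set T} -> R) (k : nat) : R :=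
  \big[Num.max/0]_(S : {set T} | (#|S| <= k)%N) f S.

Definition gamma_c : R := 1 / 100%:R.
Definition eta_c : R := 5%:R / 100000%:R.

Definition dense (f : {set T} -> R) (k : nat) (D : {set T}) : Prop :=
  (#|D|%:R <= eta_c * k%:R) /\ ((1 - gamma_c) / 2%:R * OPT f k <= f D).

(* stream e_1..e_n given by e : 'I_n -> T; element e i sits at position i+1 *)
Definition in_left (n : nat) (i : 'I_n) : bool := (10 * i.+1 <= 9 * n)%N.

Definition leftpart (n : nat) (e : 'I_n -> T) (X : {set T}) : {set T} :=
  X :&: [set e i | i : 'I_n & in_left i].
Definition rightpart (n : nat) (e : 'I_n -> T) (X : {set T}) : {set T} :=
  X :\: leftpart e X.

Definition alg1_step (f : {set T} -> R) (k n : nat) (e : 'I_n -> T) (opt : R)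
    (S : {set T}) (i : 'I_n) : {set T} :=
  if (#|S| < k)%N &&
     (if in_left i then 100%:R / k%:R * opt <= marg f [set e i] S
      else 1 / (10 * k)%:R * opt <= marg f [set e i] S)
  then e i |: S else S.

Definition alg1 (f : {set T} -> R) (k n : nat) (e : 'I_n -> T) (opt : R) : {set T} :=
  foldl (alg1_step f k e opt) set0 (enum 'I_n).

End Defs.

From HB Require Import structures.
From mathcomp Require Import all_boot all_order all_algebra.
From mathcomp Require Import lra zify.
Set Implicit Arguments. Unset Strict Implicit. Unset Printing Implicit Defensive.
Import Order.TTheory GRing.Theory Num.Theory.
Local Open Scope ring_scope.

(* Write t = OPT / k: Algorithm 1 accepts an element of the first 0.9n
   positions when its marginal gain is at least 100t, a later one when it is
   at least t/10.
   If S ends with fewer than k elements, every stream element was rejected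
   against a subset of S, so by diminishing returns adding D_L to S gains at
   most 100t|D_L| and adding D_R and O_R at most (t/10)(|D| + |O_R|).  As
   D ∪ O_R = D_L ∪ D_R ∪ O_R and f(D ∪ O_R) >= 0.95 f(D) + 0.05 OPT, the
   density of D gives the bound.
   If S is full, let S_L be the set after the first 0.9n elements.  Each of its
   elements gained 100t, so |S_L| <= k/100 and S_L is not full; hence
   f(S_L) >= f(D_L) - 100t|D_L| >= 0.85 f(D) - 0.00475 OPT.  The last 0.1n
   elements then fill S up to k at gain t/10 each, so
   f(S) >= f(S_L) + t(k - |S_L|)/10 >= 0.999 f(S_L) + 0.1 OPT. *)

Section Submodularity.
Variables (R : realFieldType) (T : finType) (f : {set T} -> R).

Lemma marg_eq0 (X S : {set T}) : X \subset S -> marg f X S = 0.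
Proof. by move=> sXS; rewrite /marg (setUidPr sXS) subrr. Qed.

Lemma le_OPT (k : nat) (X : {set T}) : (#|X| <= k)%N -> f X <= OPT f k.
Proof. exact: le_bigmax_cond. Qed.

Lemma sub_le_marg (X S : {set T}) : monotone f -> f X - f S <= marg f X S.
Proof. by move=> f_mono; rewrite /marg lerD2r f_mono ?subsetUl. Qed.

Hypotheses (f_mono : monotone f) (f_sub : submodular f).

Lemma marg_subset (X A B : {set T}) : A \subset B -> marg f X B <= marg f X A.
Proof.
rewrite /marg => sAB; have := f_sub (X :|: A) B.
have -> : X :|: A :|: B = X :|: B by rewrite -setUA (setUidPr sAB).
have : f A <= f ((X :|: A) :&: B) by apply: f_mono; rewrite subsetI subsetUr sAB.
lra.
Qed.

Lemma margU_le (X1 X2 S : {set T}) :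
  marg f (X1 :|: X2) S <= marg f X1 S + marg f X2 S.
Proof. have := marg_subset X1 (subsetUr X2 S); rewrite /marg -!setUA; lra. Qed.

Lemma marg_union_bound (X S : {set T}) (c : R) :
  (forall x, x \in X -> marg f [set x] S <= c) -> marg f X S <= #|X|%:R * c.
Proof.
have [m] := ubnP #|X|; elim: m X => // m IH X ltXm le_c.
case: (set_0Vmem X) => [->|[x Xx]].
  by rewrite marg_eq0 ?sub0set ?cards0 ?mul0r.
rewrite (cardsD1 x X) Xx -[in marg f X S](setD1K Xx).
rewrite add1n -addn1 natrD mulrDl mul1r addrC.
apply: le_trans (margU_le _ _ _) _; apply: lerD; first exact: le_c.
apply: IH => [|y /setD1P[_ Xy]]; last exact: le_c.
by move: ltXm; rewrite (cardsD1 x X) Xx.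
Qed.

End Submodularity.

Section Algorithm1.
Variables (R : realFieldType) (T : finType) (f : {set T} -> R) (k n : nat).
Variables (e : 'I_n -> T) (opt : R).

Definition threshold (i : 'I_n) : R :=
  (if in_left i then 100%:R else 10%:R^-1) * (opt / k%:R).

Local Notation step := (alg1_step f k e opt).

Lemma alg1_stepE (S : {set T}) (i : 'I_n) :
  step S i = if (#|S| < k)%N && (threshold i <= marg f [set e i] S)
             then e i |: S else S.
Proof.
rewrite /alg1_step /threshold; case: (in_left i); first by rewrite mulrAC mulrA.
by rewrite natrM invfM mul1r mulrAC mulrA.
Qed.

Lemma subset_foldl_step (A : {set T}) (l : seq 'I_n) : A \subset foldl step A l.
Proof.
elim: l A => [|i l IH] A /=; first exact: subxx.
by apply: subset_trans (IH _); rewrite alg1_stepE; case: ifP => // _; apply: subsetUr.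
Qed.

Lemma card_foldl_step (A : {set T}) (l : seq 'I_n) :
  (#|A| <= k)%N -> (#|foldl step A l| <= k)%N.
Proof.
elim: l A => [|i l IH] A //= leAk; apply: IH; rewrite alg1_stepE.
by case: ifP => // /andP[ltAk _]; rewrite cardsU1; case: (e i \notin A) => /=; lia.
Qed.

Lemma foldl_step_gain (A : {set T}) (l : seq 'I_n) (c : R) :
  0 <= c -> (forall i, i \in l -> c <= threshold i) ->
  c * #|foldl step A l|%:R - c * #|A|%:R <= f (foldl step A l) - f A.
Proof.
move=> c_ge0; elim: l A => [|i l IH] A /= le_c; first lra.
have := IH (step A i) (fun j lj => le_c j (mem_behead (s := i :: l) lj)).
have c_le_thr := le_c i (mem_head i l).
rewrite alg1_stepE; case: ifP => [/andP[_ accepted]|_] gain_l; last lra.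
have card_iA : #|e i |: A|%:R <= #|A|%:R + 1 :> R.
  by rewrite natr1 ler_nat cardsU1; case: (e i \notin A).
have : c * #|e i |: A|%:R <= c * #|A|%:R + c.
  by rewrite -[X in _ + X]mulr1 -mulrDr; apply: ler_wpM2l.
move: accepted; rewrite /marg; lra.
Qed.

Hypotheses (f_mono : monotone f) (f_sub : submodular f) (opt_ge0 : 0 <= opt).

Lemma threshold_ge0 (i : 'I_n) : 0 <= threshold i.
Proof. by apply: mulr_ge0; [case: (in_left i); rewrite ?invr_ge0 | rewrite divr_ge0]. Qed.

(* By diminishing returns: e i was either taken, or rejected against a subset
   of the final set. *)
Lemma foldl_step_rejected (A : {set T}) (l : seq 'I_n) (i : 'I_n) :
  i \in l -> (#|foldl step A l| < k)%N ->
  marg f [set e i] (foldl step A l) <= threshold i.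
Proof.
elim: l A => [|j l IH] A //=; rewrite in_cons => /predU1P[-> |li]; last exact: IH.
move: (subset_foldl_step (step A j) l); rewrite alg1_stepE.
case: ifP => [_|rejected] sub_final lt_k.
  by rewrite marg_eq0 ?threshold_ge0 // (subset_trans _ sub_final) // sub1set setU11.
move/negbT: rejected; rewrite negb_and -leqNgt -ltNge => /orP[le_kA|lt_thr].
  by move: lt_k; rewrite ltnNge (leq_trans le_kA (subset_leq_card sub_final)).
exact/ltW/(le_lt_trans (marg_subset f_mono f_sub _ sub_final)).
Qed.

End Algorithm1.

Section Stream.
Variables (T : finType) (n : nat) (e : 'I_n -> T).

Lemma in_leftE (i : 'I_n) : in_left i = (i < 9 * n %/ 10)%N.
Proof. by rewrite /in_left; apply/idP/idP; lia. Qed.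

Lemma mem_take_enum_ord (m : nat) (i : 'I_n) :
  (i \in take m (enum 'I_n)) = (i < m)%N.
Proof.
rewrite -(mem_map val_inj) map_take val_enum_ord take_iota mem_iota leq_min.
by rewrite ltn_ord andbT.
Qed.

Lemma mem_drop_enum_ord (m : nat) (i : 'I_n) :
  (i \in drop m (enum 'I_n)) = (m <= i)%N.
Proof.
rewrite -(mem_map val_inj) map_drop val_enum_ord drop_iota mem_iota add0n.
have lt_in := ltn_ord i; rewrite -[val i]/(nat_of_ord i); apply/idP/idP; lia.
Qed.

Lemma leftpartP (X : {set T}) (x : T) :
  x \in leftpart e X -> exists2 i, in_left i & x = e i.
Proof. by case/setIP=> _ /imsetP[i]; rewrite inE; exists i. Qed.

Lemma rightpartP (g : T -> 'I_n) (X : {set T}) (x : T) : cancel g e ->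
  x \in rightpart e X -> exists2 i, ~~ in_left i & x = e i.
Proof.
move=> eK /setDP[Xx xNL]; exists (g x); rewrite ?eK //.
by apply: contra xNL => gxL; rewrite inE Xx -{1}(eK x) imset_f ?inE.
Qed.

Lemma leftpart_rightpart (X : {set T}) : leftpart e X :|: rightpart e X = X.
Proof. by rewrite /rightpart setDIr setDv set0U setID. Qed.

End Stream.

Section Theorem7.
Variables (R : realFieldType) (T : finType) (n : nat) (e : 'I_n -> T).
Variables (f : {set T} -> R) (k : nat) (D : {set T}).
Hypotheses (f_mono : monotone f) (f_sub : submodular f) (k_gt0 : (0 < k)%N).
Hypotheses (opt_gt0 : 0 < OPT f k) (D_dense : dense f k D).
Hypothesis DL_card : #|leftpart e D|%:R <= 95%:R / 100%:R * eta_c R * k%:R.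

Local Notation opt := (OPT f k).
Local Notation step := (alg1_step f k e opt).
Local Notation S := (alg1 f k e opt).

Let opt_ge0 : 0 <= opt := ltW opt_gt0.
Let k_pos : 0 < k%:R :> R. Proof. by rewrite ltr0n. Qed.

Lemma card_mul_scale_le (X : {set T}) (c : R) :
  #|X|%:R <= c * k%:R -> #|X|%:R * (opt / k%:R) <= c * opt.
Proof.
move=> le_Xk; rewrite -(ler_pM2r k_pos) -mulrA divfK ?lt0r_neq0 //.
by rewrite mulrAC; apply: ler_wpM2r.
Qed.

Lemma alg1_unsaturated (g : T -> 'I_n) (O : {set T}) :
  cancel g e -> f O = opt ->
  #|rightpart e O|%:R <= 15%:R / 100%:R * k%:R :> R ->
  5%:R / 100%:R * marg f O D <= marg f (rightpart e O) D ->
  (#|S| < k)%N -> 50025%:R / 100000%:R * opt <= f S.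
Proof.
move=> eK fO OR_card OR_marg ltSk; set t := opt / k%:R.
have rejected i : marg f [set e i] S <= threshold k opt i.
  exact: foldl_step_rejected (mem_enum _ i) ltSk.
set Y := rightpart e D :|: rightpart e O.
have DL_marg : marg f (leftpart e D) S <= #|leftpart e D|%:R * (100%:R * t).
  apply: marg_union_bound => // _ /leftpartP[i iL ->].
  by move: (rejected i); rewrite /threshold iL.
have Y_marg : marg f Y S <= #|Y|%:R * (10%:R^-1 * t).
  apply: marg_union_bound => // x /setUP[] /(rightpartP eK)[i iR ->];
    by move: (rejected i); rewrite /threshold (negbTE iR).
have Y_card : #|Y|%:R <= (eta_c R + 15%:R / 100%:R) * k%:R.
  have : (#|Y| <= #|D| + #|rightpart e O|)%N.
    apply: leq_trans (leq_card_setU _ _) _.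
    by rewrite leq_add2r subset_leq_card ?subsetDl.
  rewrite -(ler_nat R) natrD => le_Y; apply: le_trans le_Y _.
  by case: D_dense => D_card _; rewrite mulrDl lerD.
have cover : D :|: rightpart e O \subset (leftpart e D :|: Y) :|: S.
  by rewrite /Y setUA leftpart_rightpart subsetUl.
have := f_mono cover; have := margU_le f_mono f_sub (leftpart e D) Y S.
have := card_mul_scale_le DL_card; have := card_mul_scale_le Y_card.
have := sub_le_marg O D f_mono; rewrite fO; case: D_dense => _.
move: OR_marg DL_marg Y_marg; rewrite /marg /eta_c /gamma_c (setUC D) -/t.
have := opt_gt0; lra.
Qed.

Lemma alg1_saturated :
  nonneg f -> 85%:R / 100%:R * f D <= f (leftpart e D) ->
  (k <= #|S|)%N -> 50025%:R / 100000%:R * opt <= f S.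
Proof.
move=> f_ge0 DL_val leKS; set t := opt / k%:R; set m := (9 * n %/ 10)%N.
set SL := foldl step set0 (take m (enum 'I_n)).
have S_SL : S = foldl step SL (drop m (enum 'I_n)).
  by rewrite /alg1 -foldl_cat cat_take_drop.
have t_gt0 : 0 < t by rewrite divr_gt0.
have kt : k%:R * t = opt by rewrite mulrC divfK ?lt0r_neq0.
have SL_gain : 100%:R * t * #|SL|%:R <= f SL.
  have gain : 100%:R * t * #|SL|%:R - 100%:R * t * #|@set0 T|%:R <= f SL - f set0.
    apply: foldl_step_gain => [|i]; first by rewrite mulr_ge0 // ltW.
    by rewrite mem_take_enum_ord -in_leftE /threshold => ->.
  by move: gain (f_ge0 set0); rewrite cards0; lra.
have SL_le_opt : f SL <= opt by rewrite le_OPT // card_foldl_step ?cards0.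
have SL_lt_k : (#|SL| < k)%N.
  have : (100 * #|SL|)%:R * t <= k%:R * t.
    by rewrite kt natrM; lra.
  by rewrite ler_pM2r // ler_nat; lia.
have DL_marg : marg f (leftpart e D) SL <= #|leftpart e D|%:R * (100%:R * t).
  apply: marg_union_bound => // _ /leftpartP[i iL ->].
  have iSL : i \in take m (enum 'I_n) by rewrite mem_take_enum_ord -in_leftE.
  have := foldl_step_rejected f_mono f_sub opt_ge0 iSL SL_lt_k.
  by rewrite /threshold iL.
have S_gain : 10%:R^-1 * t * #|S|%:R - 10%:R^-1 * t * #|SL|%:R <= f S - f SL.
  rewrite S_SL; apply: foldl_step_gain => [|i].
    by rewrite mulr_ge0 ?invr_ge0 // ltW.
  by rewrite mem_drop_enum_ord leqNgt -in_leftE /threshold => /negbTE ->.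
have opt_le_S : opt <= t * #|S|%:R.
  by rewrite -{1}kt mulrC ler_pM2l // ler_nat.
have := card_mul_scale_le DL_card; have := f_mono (subsetUl (leftpart e D) SL).
have := opt_gt0; case: D_dense => _.
move: DL_val DL_marg; rewrite /marg /eta_c /gamma_c -/t; lra.
Qed.

End Theorem7.

Theorem mainTheorem7 (R : realFieldType) (T : finType) (n : nat)
  (e : 'I_n -> T) (f : {set T} -> R) (k : nat) (D O : {set T}) :
  bijective e ->
  nonneg f -> monotone f -> submodular f -> normalized f ->
  (0 < k)%N -> (k <= n)%N ->
  dense f k D ->
  (#|O| <= k)%N -> f O = OPT f k ->
  #|leftpart e D|%:R <= 95%:R / 100%:R * eta_c R * k%:R ->
  85%:R / 100%:R * f D <= f (leftpart e D) ->
  (#|rightpart e O|%:R : R) <= 15%:R / 100%:R * k%:R ->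
  5%:R / 100%:R * marg f O D <= marg f (rightpart e O) D ->
  50025%:R / 100000%:R * OPT f k <= f (alg1 f k e (OPT f k)).
Proof.
move=> [g _ eK] f_ge0 f_mono f_sub _ k_gt0 _ D_dense _ fO DL_card DL_val OR_card OR_marg.
have [opt_le0|opt_gt0] := lerP (OPT f k) 0.
  by move: opt_le0 (f_ge0 (alg1 f k e (OPT f k))); lra.
have [S_lt_k|S_ge_k] := ltnP #|alg1 f k e (OPT f k)| k.
- exact: (alg1_unsaturated f_mono f_sub k_gt0 opt_gt0 D_dense DL_card
    eK fO OR_card OR_marg S_lt_k).
- exact: alg1_saturated f_mono f_sub k_gt0 opt_gt0 D_dense DL_card
    f_ge0 DL_val S_ge_k.
Qed.
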